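(* Let $p\ge1$ and let $m(z,w)$, $m'(z,w)$ be monomials (coefficient 1) of degree $p$ in $z_i,\bar z_i,w_j,\bar w_j$ such that $\bar z_1m$ and $\bar w_1m'$ are invariant under all translations $T_{a,b}$. Put $f(z,w)=m(z,w)+m(\gamma_3(z,w))$ and $h(z,w)=m'(z,w)$. Then there exists a single function $P:A(\kappa)^{p+1}\to\mathbb C$ which is $O(2)$-invariant ($P(\gamma k,\gamma k_1,\dots,\gamma k_p)=P(k,k_1,\dots,k_p)$ for all $\gamma\in O(2)$) and satisfies $P(k,k_1,\dots,k_p)=0$ whenever $k\ne k_1+\dots+k_p$, such that for all $(z,w)$ $$f(z,w)=\sum_{k_1,\dots,k_p\in\tilde A}a(k_1)\cdots a(k_p)P(q_1,k_1,\dots,k_p),\qquad h(z,w)=\sum_{k_1,\dots,k_p\in\tilde A}a(k_1)\cdots a(k_p)P(p_1,k_1,\dots,k_p),$$ if and only if $f(z_1,z_2,0,w_2,w_3,0)=h(w_2,w_3,z_1,0,0,\bar z_2)$ for all $z_1,z_2,w_2,w_3$.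
   Context: Integers $l_1>l_2>n_2>0$ with $\kappa^2=l_1^2=l_2^2+n_2^2$; $A(\kappa)=\{k\in\mathbb R^2:|k|=\kappa\}$. Wave vectors $q_1=(l_1,0)$, $q_2=(0,l_1)$, $p_1=(l_2,n_2)$, $p_2=(l_2,-n_2)$, $p_3=(n_2,l_2)$, $p_4=(n_2,-l_2)$, $\tilde A=\{\pm q_i,\pm p_j\}$. For $(z,w)=(z_1,z_2,w_1,\dots,w_4)\in\mathbb C^6$, $a:\tilde A\to\mathbb C$ is defined by $a(q_i)=z_i$, $a(-q_i)=\bar z_i$, $a(p_j)=w_j$, $a(-p_j)=\bar w_j$. Translations: $T_{a,b}(z,w)=(e^{-il_1a}z_1,e^{-il_1b}z_2,e^{-i(l_2a+n_2b)}w_1,e^{-i(l_2a-n_2b)}w_2,e^{-i(n_2a+l_2b)}w_3,e^{-i(n_2a-l_2b)}w_4)$. $\gamma_3(z,w)=(z_1,\bar z_2,w_2,w_1,w_4,w_3)$. *)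

From HB Require Import structures.
From mathcomp Require Import all_boot all_order all_algebra.
From mathcomp Require Import reals trigo.
From mathcomp Require Export complex.
Set Implicit Arguments. Unset Strict Implicit. Unset Printing Implicit Defensive.
Import Order.TTheory GRing.Theory Num.Theory.
Local Open Scope ring_scope.

Section Defs.
Variable R : realType.
Local Notation C := (complex R).

Definition expi (t : R) : C := (cos t +i* sin t)%C.

Definition pt (x y : R) : 'rV[R]_2 := \row_(i < 2) (if i == 0 :> nat then x else y).

Definition onA (kappa : R) (k : 'rV[R]_2) : Prop :=
  Num.sqrt (k 0 0 ^+ 2 + k 0 1 ^+ 2) = kappa.

(* O(2) acting on row vectors by k |-> k *m g. *)
Definition orth2 (g : 'M[R]_2) : Prop := g *m g^T = 1%:M.

(* The six basic wave vectors, indexed by 'I_6 in the order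
   q1, q2, p1, p2, p3, p4 (matching the coordinates z1,z2,w1,w2,w3,w4). *)
Definition basevec (l1 l2 n2 : nat) (j : 'I_6) : 'rV[R]_2 :=
  match val j with
  | 0 => pt l1%:R 0
  | 1 => pt 0 l1%:R
  | 2 => pt l2%:R n2%:R
  | 3 => pt l2%:R (- n2%:R)
  | 4 => pt n2%:R l2%:R
  | _ => pt n2%:R (- l2%:R)
  end.

(* tilde A is indexed by 'I_6 * bool : (j,false) = +basevec j, (j,true) = -basevec j. *)
Definition tvec (l1 l2 n2 : nat) (v : 'I_6 * bool) : 'rV[R]_2 :=
  if v.2 then - basevec l1 l2 n2 v.1 else basevec l1 l2 n2 v.1.

(* (z,w) in C^6 is a function x : 'I_6 -> C, x = (z1,z2,w1,w2,w3,w4).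
   avar x v is the variable z_i, \bar z_i, w_j, \bar w_j; it is also a(k) for k = tvec v. *)
Definition avar (x : 'I_6 -> C) (v : 'I_6 * bool) : C :=
  if v.2 then (x v.1)^* else x v.1.

Definition mono (e : 'I_6 * bool -> nat) (x : 'I_6 -> C) : C :=
  \prod_(v : 'I_6 * bool) avar x v ^+ e v.

Definition degree (e : 'I_6 * bool -> nat) : nat := \sum_(v : 'I_6 * bool) e v.

(* Translations T_{a,b}:
   z1 -> e^{-i l1 a} z1, z2 -> e^{-i l1 b} z2, w1 -> e^{-i(l2 a + n2 b)} w1,
   w2 -> e^{-i(l2 a - n2 b)} w2, w3 -> e^{-i(n2 a + l2 b)} w3, w4 -> e^{-i(n2 a - l2 b)} w4. *)
Definition transl (l1 l2 n2 : nat) (a b : R) (x : 'I_6 -> C) : 'I_6 -> C :=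
  fun j => expi (- (basevec l1 l2 n2 j 0 0 * a + basevec l1 l2 n2 j 0 1 * b)) * x j.

Definition gamma3 (x : 'I_6 -> C) : 'I_6 -> C :=
  fun j => match val j with
  | 0 => x 0
  | 1 => (x 1)^*
  | 2 => x 3
  | 3 => x 2
  | 4 => x 5
  | _ => x 4
  end.

Definition vec6 (z1 z2 w1 w2 w3 w4 : C) : 'I_6 -> C :=
  fun j => match val j with
  | 0 => z1 | 1 => z2 | 2 => w1 | 3 => w2 | 4 => w3 | _ => w4 end.

Definition Psum (l1 l2 n2 p : nat) (P : 'rV[R]_2 -> ('I_p -> 'rV[R]_2) -> C)
  (k : 'rV[R]_2) (x : 'I_6 -> C) : C :=
  \sum_(t : {ffun 'I_p -> 'I_6 * bool})
     (\prod_(i < p) avar x (t i)) * P k (fun i => tvec l1 l2 n2 (t i)).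

End Defs.

From HB Require Import structures.
From mathcomp Require Import all_boot all_order all_algebra.
From mathcomp Require Import reals trigo complex.
From mathcomp Require Import boolp ring lra zify.
Import Order.TTheory GRing.Theory Num.Theory.
Set Implicit Arguments. Unset Strict Implicit. Unset Printing Implicit Defensive.
Local Open Scope ring_scope.

(* Since |k| = kappa > 0, an O(2)-invariant function of (k, k_1, ..., k_p) is the same as
   a function of the frame coordinates (k.k_i, k x k_i)_i that is invariant under changing
   the sign of all cross products.  So P can be prescribed freely on the O(2)-orbits of the
   configurations (q_1, k_1, ..., k_p) and (p_1, k_1, ..., k_p) with k_i in tilde A, as long
   as the prescriptions agree where these orbits meet.  The rotation by minus the angle of
   p_1 maps p_1 to q_1, and it keeps a vector of tilde A inside tilde A exactly when that
   vector is one of +-q_1, +-q_2, +-p_1, +-p_4; any other coincidence between the two frames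
   would force l_2^2 = 3 n_2^2 or (l_2 - n_2)^2 = 2 n_2^2, which the irrationality of sqrt 3
   and sqrt 2 excludes.  On the tuples where the orbits meet, the prescriptions by f and by
   h agree exactly when f(z_1,z_2,0,w_2,w_3,0) = h(w_2,w_3,z_1,0,0,\bar z_2).  Translation
   invariance makes the wave vectors of the monomials of f and h sum to q_1 and p_1, so the
   support condition k = k_1 + ... + k_p costs nothing. *)

Lemma sqrt_prime_irrational q a b : prime q -> (a ^ 2 = q * b ^ 2)%N -> b = 0%N.
Proof.
move=> q_pr; have q_gt1 := prime_gt1 q_pr.
case: (posnP b) => // b_gt0 eq_ab; exfalso.
have a_gt0 : (0 < a)%N by case: a eq_ab => // /esym /eqP; rewrite muln_eq0 expn_eq0; lia.
have := congr1 (logn q) eq_ab.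
rewrite lognM ?expn_gt0 ?b_gt0 ?prime_gt0 // !lognX (logn_prime q q_pr) eqxx; lia.
Qed.

Lemma mulmx2E (R : pzRingType) m n (A : 'M[R]_(m, 2)) (B : 'M[R]_(2, n)) i j :
  (A *m B) i j = A i 0 * B 0 j + A i 1 * B 1 j.
Proof. by rewrite mxE !big_ord_recl big_ord0 addr0 [lift _ _](_ : _ = 1) //; apply/val_inj. Qed.

Lemma row2P (T : Type) (u v : 'rV[T]_2) : u 0 0 = v 0 0 -> u 0 1 = v 0 1 -> u = v.
Proof.
move=> u0 u1; apply/rowP => j.
by have [->|->] : j = 0 \/ j = 1 by case: j => [[|[|//]] ?]; [left | right]; apply/val_inj.
Qed.

Section Orth2.
Variable R : realType.

Definition dot2 (u v : 'rV[R]_2) := u 0 0 * v 0 0 + u 0 1 * v 0 1.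
Definition cross2 (u v : 'rV[R]_2) := u 0 0 * v 0 1 - u 0 1 * v 0 0.

Lemma orth2_entries (g : 'M[R]_2) : orth2 g ->
  [/\ g 0 0 ^+ 2 + g 0 1 ^+ 2 = 1, g 1 0 ^+ 2 + g 1 1 ^+ 2 = 1
    & g 0 0 * g 1 0 + g 0 1 * g 1 1 = 0].
Proof.
move=> gK; have e i j := congr1 (fun M : 'M[R]_2 => M i j) gK.
have := e 0 0; have := e 1 1; have := e 0 1; rewrite !mulmx2E !mxE /= -!expr2.
by move=> -> -> ->.
Qed.

Lemma dot2_orth2 (g : 'M[R]_2) u v : orth2 g -> dot2 (u *m g) (v *m g) = dot2 u v.
Proof.
move=> /orth2_entries [r0 r1 r01]; rewrite /dot2 !mulmx2E.
transitivity (u 0 0 * v 0 0 * (g 0 0 ^+ 2 + g 0 1 ^+ 2) + u 0 1 * v 0 1 * (g 1 0 ^+ 2 + g 1 1 ^+ 2)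
  + (u 0 0 * v 0 1 + u 0 1 * v 0 0) * (g 0 0 * g 1 0 + g 0 1 * g 1 1)); first by ring.
by rewrite r0 r1 r01; ring.
Qed.

Lemma cross2_orth2 (g : 'M[R]_2) : orth2 g ->
  exists2 s : R, s = 1 \/ s = -1 & forall u v, cross2 (u *m g) (v *m g) = s * cross2 u v.
Proof.
move=> /orth2_entries [r0 r1 r01]; set s := g 0 0 * g 1 1 - g 0 1 * g 1 0.
exists s; last by move=> u v; rewrite /cross2 !mulmx2E /s; ring.
have s2 : s ^+ 2 = 1.
  transitivity ((g 0 0 ^+ 2 + g 0 1 ^+ 2) * (g 1 0 ^+ 2 + g 1 1 ^+ 2)
    - (g 0 0 * g 1 0 + g 0 1 * g 1 1) ^+ 2); first by rewrite /s; ring.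
  by rewrite r0 r1 r01; ring.
by have /eqP := s2; rewrite sqrf_eq1 => /orP[/eqP|/eqP]; [left | right].
Qed.

Lemma orth2_mulmx_inj (g : 'M[R]_2) : orth2 g -> injective (mulmx^~ g : 'rV[R]_2 -> 'rV[R]_2).
Proof. by move=> gK u v /(congr1 (mulmx^~ g^T)); rewrite -!mulmxA gK !mulmx1. Qed.

End Orth2.

Section Expi.
Variable R : realType.

Lemma expiD (a b : R) : expi (a + b) = expi a * expi b.
Proof.
rewrite /expi cosD sinD; apply/eqP; rewrite eq_complex /=.
by apply/andP; split; apply/eqP; ring.
Qed.

Lemma expi0 : expi (0 : R) = 1.
Proof. by rewrite /expi cos0 sin0. Qed.

Lemma conj_expi (a : R) : (expi a)^* = expi (- a).
Proof. by rewrite /expi cosN sinN. Qed.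

Lemma prod_expi (I : Type) (r : seq I) (F : I -> R) :
  \prod_(i <- r) expi (F i) = expi (\sum_(i <- r) F i).
Proof. by rewrite (big_morph _ expiD expi0). Qed.

Lemma expi_mul_eq1 (K : R) : (forall a, expi (K * a) = 1) -> K = 0.
Proof.
move=> eK; apply/eqP; apply: contraT => K_neq0.
have := eK (pi / 2 / K); rewrite mulrC divfK // /expi sin_pihalf cos_pihalf.
by move/eqP; rewrite eq_complex /= => /andP[_ /eqP]; lra.
Qed.

End Expi.

Notation V := ('I_6 * bool)%type.

Ltac case_V v := case: v => [[[|[|[|[|[|[|?]]]]]] ?] []] //.

(* For [v \in Drot], i.e. v one of +-q_1, +-q_2, +-p_1, +-p_4, the rotation of v by minus
   the angle of p_1 lies in tilde A again and [rotm v] is its index; outside Drot,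
   [rotm v] is junk. *)
Definition Drot : pred V := fun v => val v.1 \in [:: 0; 1; 2; 5]%N.

Definition rotm (v : V) : V :=
  let: (j, b) := v in
  match val j with
  | 0 => (@Ordinal 6 3 isT, b) | 1 => (@Ordinal 6 4 isT, b) | 2 => (@Ordinal 6 0 isT, b)
  | 3 => (@Ordinal 6 2 isT, b) | 4 => (@Ordinal 6 5 isT, b) | _ => (@Ordinal 6 1 isT, ~~ b)
  end.

(* The reflection (x, y) |-> (x, -y) of tilde A; on the variables it is gamma_3. *)
Definition vflip (v : V) : V :=
  let: (j, b) := v in
  match val j with
  | 1 => (j, ~~ b) | 2 => (@Ordinal 6 3 isT, b) | 3 => (@Ordinal 6 2 isT, b)
  | 4 => (@Ordinal 6 5 isT, b) | 5 => (@Ordinal 6 4 isT, b) | _ => (j, b)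
  end.

Lemma vflipK : involutive vflip.
Proof. by move=> v; case_V v; apply/eqP. Qed.

Lemma rotm_inj : injective rotm.
Proof. by move=> v w; case_V v; case_V w; move=> /eqP h; apply/eqP; move: h. Qed.

Section TildeA.
Variables (R : realType) (l1 l2 n2 : nat).
Local Notation tv := (tvec R l1 l2 n2).
Local Notation q1 := (basevec R l1 l2 n2 0).
Local Notation p1 := (basevec R l1 l2 n2 2).

(* The coordinates of [tv v], in a form that computes by case analysis on v. *)
Definition basex (j : 'I_6) : R :=
  match val j with 0 => l1%:R | 1 => 0 | 2 | 3 => l2%:R | _ => n2%:R end.
Definition basey (j : 'I_6) : R :=
  match val j with 0 => 0 | 1 => l1%:R | 2 => n2%:R | 3 => - n2%:R | 4 => l2%:R | _ => - l2%:R end.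
Definition tx (v : V) : R := if v.2 then - basex v.1 else basex v.1.
Definition ty (v : V) : R := if v.2 then - basey v.1 else basey v.1.

Lemma tvec_x v : tv v 0 0 = tx v.
Proof. by rewrite /tvec /basevec /pt /tx /basex; case_V v; rewrite /= ?mxE. Qed.

Lemma tvec_y v : tv v 0 1 = ty v.
Proof. by rewrite /tvec /basevec /pt /ty /basey; case_V v; rewrite /= ?mxE. Qed.

Lemma tx_vflip v : tx (vflip v) = tx v.
Proof. by case_V v; rewrite /tx /basex /= ?oppr0. Qed.

Lemma ty_vflip v : ty (vflip v) = - ty v.
Proof. by case_V v; rewrite /ty /basey /= ?opprK ?oppr0. Qed.

Lemma dot2_q1 v : dot2 q1 (tv v) = l1%:R * tx v.
Proof. by rewrite /dot2 -[q1]/(tv (0, false)) !tvec_x !tvec_y /tx /ty /= mul0r addr0. Qed.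

Lemma cross2_q1 v : cross2 q1 (tv v) = l1%:R * ty v.
Proof. by rewrite /cross2 -[q1]/(tv (0, false)) !tvec_x !tvec_y /tx /ty /= mul0r subr0. Qed.

Lemma dot2_p1 v : dot2 p1 (tv v) = l2%:R * tx v + n2%:R * ty v.
Proof. by rewrite /dot2 -[p1]/(tv (2, false)) !tvec_x !tvec_y. Qed.

Lemma cross2_p1 v : cross2 p1 (tv v) = l2%:R * ty v - n2%:R * tx v.
Proof. by rewrite /cross2 -[p1]/(tv (2, false)) !tvec_x !tvec_y /tx /ty /=; ring. Qed.

Lemma avar_gamma3 (x : 'I_6 -> complex R) v : avar (gamma3 x) v = avar x (vflip v).
Proof.
by case_V v; rewrite /avar /gamma3 /= ?conjCK; do ?congr (_ ^*); congr (x _); apply/val_inj.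
Qed.

Lemma avar_transl a b (x : 'I_6 -> complex R) v :
  avar (transl l1 l2 n2 a b x) v = expi (- (tx v * a + ty v * b)) * avar x v.
Proof.
rewrite /avar /transl -[basevec _ _ _ _ _]/(tv (v.1, false)) tvec_x tvec_y.
case: v => j []; cbn [fst snd]; last by rewrite /tx /ty.
rewrite rmorphM; congr (_ * _).
have -> : tx (j, true) * a + ty (j, true) * b = - (tx (j, false) * a + ty (j, false) * b).
  by rewrite /tx /ty /=; ring.
exact: conj_expi.
Qed.

Lemma transl_invariant_sum n (t : {ffun 'I_n -> V}) (j0 : 'I_6) :
  (forall a b (x : 'I_6 -> complex R),
     (transl l1 l2 n2 a b x j0)^* * \prod_i avar (transl l1 l2 n2 a b x) (t i)
     = (x j0)^* * \prod_i avar x (t i)) ->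
  \sum_i tv (t i) = basevec R l1 l2 n2 j0.
Proof.
move=> inv_t; pose one (_ : 'I_6) : complex R := 1.
have avar_one v : avar one v = 1 by rewrite /avar; case: ifP; rewrite ?conjC1.
have phase a b : expi ((tx (j0, false) - \sum_i tx (t i)) * a
                       + (ty (j0, false) - \sum_i ty (t i)) * b) = 1.
  have := inv_t a b one.
  rewrite -[(transl _ _ _ _ _ _ j0)^*]/(avar _ (j0, true)) avar_transl avar_one mulr1.
  under eq_bigr do rewrite avar_transl avar_one mulr1.
  have prod_one : \prod_i avar one (t i) = 1 by rewrite big1.
  rewrite prod_expi -expiD prod_one /one conjC1 mul1r => <-.
  congr expi; rewrite sumrN big_split /= -!mulr_suml /tx /ty /=; ring.
have x_eq : tx (j0, false) - \sum_i tx (t i) = 0.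
  by apply: expi_mul_eq1 => a; rewrite -(phase a 0) mulr0 addr0.
have y_eq : ty (j0, false) - \sum_i ty (t i) = 0.
  by apply: expi_mul_eq1 => b; rewrite -(phase 0 b) mulr0 add0r.
apply: row2P; rewrite !summxE -[basevec _ _ _ _ _]/(tv (j0, false)).
  under eq_bigr do rewrite tvec_x.
  by apply/eqP; rewrite tvec_x eq_sym -subr_eq0 x_eq.
under eq_bigr do rewrite tvec_y.
by apply/eqP; rewrite tvec_y eq_sym -subr_eq0 y_eq.
Qed.

Section Pythagorean.
Hypotheses (n2_gt0 : (0 < n2)%N) (n2_lt_l2 : (n2 < l2)%N) (l2_lt_l1 : (l2 < l1)%N)
  (pyth : (l1 ^ 2 = l2 ^ 2 + n2 ^ 2)%N).

Let n2R_gt0 : 0 < n2%:R :> R. Proof. by rewrite ltr0n. Qed.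
Let n2R_lt_l2R : n2%:R < l2%:R :> R. Proof. by rewrite ltr_nat. Qed.
Let l2R_gt0 : 0 < l2%:R :> R. Proof. by rewrite ltr0n; lia. Qed.
Let l2R_lt_l1R : l2%:R < l1%:R :> R. Proof. by rewrite ltr_nat. Qed.
Let l1R_gt0 : 0 < l1%:R :> R. Proof. by rewrite ltr0n; lia. Qed.
Let l1R_neq0 : l1%:R != 0 :> R. Proof. exact: lt0r_neq0. Qed.
Let pythR : l1%:R ^+ 2 = l2%:R ^+ 2 + n2%:R ^+ 2 :> R.
Proof. by rewrite -!natrX -natrD pyth. Qed.

Let l2R_neq_sqrt3 : l2%:R ^+ 2 != 3 * n2%:R ^+ 2 :> R.
Proof.
rewrite -!natrX -natrM eqr_nat; apply/eqP => /(sqrt_prime_irrational (isT : prime 3)) n2_0.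
by move: n2_gt0; rewrite n2_0.
Qed.

Let l2R_n2R_neq_sqrt2 : (l2%:R - n2%:R) ^+ 2 != 2 * n2%:R ^+ 2 :> R.
Proof.
rewrite -natrB 1?ltnW // -!natrX -natrM eqr_nat.
apply/eqP => /(sqrt_prime_irrational (isT : prime 2)) n2_0.
by move: n2_gt0; rewrite n2_0.
Qed.

Lemma txy_inj v w : tx v = tx w -> ty v = ty w -> v = w.
Proof.
have := n2R_gt0; have := n2R_lt_l2R; have := l2R_lt_l1R.
case_V v; case_V w; rewrite /tx /ty /basex /basey /= => *.
all: solve [apply/eqP; done | exfalso; lra].
Qed.

Lemma txy_norm v : tx v ^+ 2 + ty v ^+ 2 = l1%:R ^+ 2.
Proof. by have := pythR; case_V v; rewrite /tx /ty /basex /basey /= => ?; nra. Qed.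

Lemma txy_rotm v : v \in Drot ->
  l2%:R * tx v + n2%:R * ty v = l1%:R * tx (rotm v) /\
  l2%:R * ty v - n2%:R * tx v = l1%:R * ty (rotm v).
Proof. by have := pythR; case_V v; rewrite /tx /ty /basex /basey /= => ? _; split; nra. Qed.

(* Every impossible coincidence reduces, after cancelling l2 or n2 if needed, to
   l2^2 = 3 n2^2, to (l2 - n2)^2 = 2 n2^2, or to a violation of 0 < n2 < l2 < l1. *)
Ltac pyth_absurd :=
  let ne2 := fresh "ne2" in let ne3 := fresh "ne3" in
  have := n2R_gt0; have := n2R_lt_l2R; have := l2R_lt_l1R; have := pythR;
  have /eqP := l2R_neq_sqrt3; have /eqP := l2R_n2R_neq_sqrt2;
  intros ne2 ne3 ? ? ? ?; exfalso;
  first [ clear ne2 ne3; nra | clear ne2; apply: ne3; nra | clear ne3; apply: ne2; nra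
  | have ? : l1%:R = 2 * n2%:R :> R by (apply: (mulfI (lt0r_neq0 l2R_gt0)); clear ne2 ne3; nra)
  | have ? : l1%:R = 2 * l2%:R :> R by (apply: (mulfI (lt0r_neq0 n2R_gt0)); clear ne2 ne3; nra) ];
  first [ clear ne2 ne3; nra | clear ne2; apply: ne3; nra ].

(* The hypotheses say that w is v rotated by minus the angle of p1. *)
Lemma Drot_of_rotation v w :
  l2%:R * tx v + n2%:R * ty v = l1%:R * tx w ->
  l2%:R * ty v - n2%:R * tx v = l1%:R * ty w -> v \in Drot.
Proof.
by case_V v; case_V w; rewrite /tx /ty /basex /basey /= => e1 e2; by [] || pyth_absurd.
Qed.

(* The hypotheses say that w is the mirror image of v in the line through p1. *)
Lemma Drot_of_reflection v w :
  l2%:R * tx w + n2%:R * ty w = l2%:R * tx v + n2%:R * ty v ->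
  l2%:R * ty w - n2%:R * tx w = - (l2%:R * ty v - n2%:R * tx v) -> v \in Drot.
Proof.
by case_V v; case_V w; rewrite /tx /ty /basex /basey /= => e1 e2; by [] || pyth_absurd.
Qed.

Lemma onA_tvec v : onA l1%:R (tv v).
Proof. by rewrite /onA tvec_x tvec_y txy_norm sqrtr_sqr ger0_norm // ltW. Qed.

Definition rotp1 : 'M[R]_2 :=
  \matrix_(i, j) ((if i == 0 then (if j == 0 then l2%:R else n2%:R)
                   else (if j == 0 then - n2%:R else l2%:R)) / l1%:R).

Lemma orth2_rotp1 : orth2 rotp1.
Proof.
apply/matrixP => i j; rewrite mulmx2E !mxE.
have [->|->] : i = 0 \/ i = 1 by case: i => [[|[|//]] ?]; [left | right]; apply/val_inj.
all: have [->|->] : j = 0 \/ j = 1 by case: j => [[|[|//]] ?]; [left | right]; apply/val_inj.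
all: rewrite /=; apply: (mulIf (expf_neq0 2 l1R_neq0)); by rewrite [in RHS]pythR; field.
Qed.

Lemma q1_rotp1 : q1 *m rotp1 = p1.
Proof. by apply: row2P; rewrite mulmx2E /basevec /pt !mxE /=; field. Qed.

Lemma tvec_rotm_rotp1 v : v \in Drot -> tv (rotm v) *m rotp1 = tv v.
Proof.
move=> /txy_rotm [ex ey].
have {}ex : tx (rotm v) = (l2%:R * tx v + n2%:R * ty v) / l1%:R by rewrite ex mulrC mulKf.
have {}ey : ty (rotm v) = (l2%:R * ty v - n2%:R * tx v) / l1%:R by rewrite ey mulrC mulKf.
apply: row2P; rewrite !mulmx2E !mxE /= !tvec_x !tvec_y ex ey.
all: apply: (mulIf (expf_neq0 2 l1R_neq0)); by rewrite [in RHS]pythR; field.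
Qed.

End Pythagorean.
End TildeA.

Section Frames.
Variables (R : realType) (p : nat).

Definition frame (k : 'rV[R]_2) (ks : 'I_p -> 'rV[R]_2) : {ffun 'I_p -> R * R} :=
  [ffun i => (dot2 k (ks i), cross2 k (ks i))].

Definition fflip (f : {ffun 'I_p -> R * R}) : {ffun 'I_p -> R * R} :=
  [ffun i => ((f i).1, - (f i).2)].

Lemma fflipK : involutive fflip.
Proof. by move=> f; apply/ffunP => i; rewrite !ffunE /= opprK; case: (f i). Qed.

Lemma frame_orth2 (g : 'M[R]_2) k ks : orth2 g ->
  frame (k *m g) (fun i => ks i *m g) = frame k ks \/
  frame (k *m g) (fun i => ks i *m g) = fflip (frame k ks).
Proof.
move=> gO; have [s [->|->] cross_g] := cross2_orth2 gO; [left | right];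
  by apply/ffunP => i; rewrite !ffunE /= dot2_orth2 // cross_g ?mul1r ?mulN1r.
Qed.

Section SymFind.
Variables (T : finType) (key : T -> {ffun 'I_p -> R * R}).

Definition symfind (f : {ffun 'I_p -> R * R}) : option T :=
  [pick t | (key t == f) || (key t == fflip f)].

Lemma symfind_fflip f : symfind (fflip f) = symfind f.
Proof. by apply: eq_pick => t; rewrite fflipK orbC. Qed.

Lemma symfind_Some f t : symfind f = Some t -> key t = f \/ key t = fflip f.
Proof. by rewrite /symfind; case: pickP => // t' /orP[] /eqP ? [<-]; [left | right]. Qed.

Lemma symfind_None f :
  (forall t, key t <> f) -> (forall t, key t <> fflip f) -> symfind f = None.
Proof.
move=> nf nff; rewrite /symfind; case: pickP => // t /orP[] /eqP.
  by move/nf.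
by move/nff.
Qed.

Lemma symfind_key t : symfind (key t) <> None.
Proof. by rewrite /symfind; case: pickP => // /(_ t); rewrite eqxx. Qed.

End SymFind.
End Frames.

Section Tuples.
Variable p : nat.
Local Notation tuple := {ffun 'I_p -> V}.

Definition tflip (t : tuple) : tuple := [ffun i => vflip (t i)].
Definition trotm (t : tuple) : tuple := [ffun i => rotm (t i)].
Definition allDrot (t : tuple) : bool := [forall i, t i \in Drot].

Lemma tflipK : involutive tflip.
Proof. by move=> t; apply/ffunP => i; rewrite !ffunE vflipK. Qed.

Lemma trotm_inj : injective trotm.
Proof.
by move=> t t' /ffunP e; apply/ffunP => i; apply: rotm_inj; have := e i; rewrite !ffunE.
Qed.

End Tuples.

Section Construction.
Variables (R : realType) (l1 l2 n2 p : nat).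
Local Notation tv := (tvec R l1 l2 n2).
Local Notation tx := (tx R l1 l2 n2).
Local Notation ty := (ty R l1 l2 n2).
Local Notation q1 := (basevec R l1 l2 n2 0).
Local Notation p1 := (basevec R l1 l2 n2 2).
Local Notation tuple := {ffun 'I_p -> V}.

Definition qframe (t : tuple) := frame q1 (fun i => tv (t i)).
Definition pframe (u : tuple) := frame p1 (fun i => tv (u i)).

Lemma sum_tflip (t : tuple) : \sum_i tv (t i) = q1 -> \sum_i tv (tflip t i) = q1.
Proof.
move=> S; apply: row2P; rewrite !summxE.
  rewrite -S summxE; apply: eq_bigr => i _.
  by rewrite ffunE !tvec_x tx_vflip.
transitivity (- (\sum_i tv (t i)) 0 1); last by rewrite S /basevec /pt !mxE /= oppr0.
rewrite summxE -sumrN; apply: eq_bigr => i _.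
by rewrite ffunE !tvec_y ty_vflip.
Qed.

Variables (c d : tuple -> complex R).

(* Looking frames up modulo [fflip] makes [invP] O(2)-invariant; where the orbits through
   q1 and p1 meet, the value prescribed by c wins. *)
Definition frame_value (f : {ffun 'I_p -> R * R}) : complex R :=
  if symfind qframe f is Some t then c t
  else if symfind pframe f is Some u then d u else 0.

Definition invP (k : 'rV[R]_2) (ks : 'I_p -> 'rV[R]_2) : complex R :=
  if k == \sum_i ks i then frame_value (frame k ks) else 0.

Lemma invP_orth2 (g : 'M[R]_2) k ks : orth2 g ->
  invP (k *m g) (fun i => ks i *m g) = invP k ks.
Proof.
move=> gO; rewrite /invP -mulmx_suml (inj_eq (orth2_mulmx_inj gO)).
case: eqP => // _; have [->|->] := frame_orth2 k ks gO => //.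
by rewrite /frame_value !symfind_fflip.
Qed.

Section Values.
Hypotheses (n2_gt0 : (0 < n2)%N) (n2_lt_l2 : (n2 < l2)%N) (l2_lt_l1 : (l2 < l1)%N)
  (pyth : (l1 ^ 2 = l2 ^ 2 + n2 ^ 2)%N).
Hypothesis c_tflip : forall t, c (tflip t) = c t.

Let l1R_neq0 : l1%:R != 0 :> R. Proof. by rewrite pnatr_eq0 -lt0n; lia. Qed.
Let pythR : l1%:R ^+ 2 = l2%:R ^+ 2 + n2%:R ^+ 2 :> R.
Proof. by rewrite -!natrX -natrD pyth. Qed.

Lemma qframe_inj : injective qframe.
Proof.
move=> t t' /ffunP e; apply/ffunP => i; have := e i; rewrite !ffunE /= !dot2_q1 !cross2_q1.
by case=> /(mulfI l1R_neq0) ex /(mulfI l1R_neq0) ey; exact: txy_inj ex ey.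
Qed.

Lemma qframe_tflip t : qframe (tflip t) = fflip (qframe t).
Proof.
apply/ffunP => i; rewrite !ffunE /= ?ffunE.
by rewrite !dot2_q1 !cross2_q1 tx_vflip ty_vflip mulrN.
Qed.

Lemma pframe_trotm u : allDrot u -> pframe u = qframe (trotm u).
Proof.
move=> /forallP uD; apply/ffunP => i; rewrite !ffunE /= ?ffunE.
have [ex ey] := txy_rotm R pyth (uD i).
by rewrite dot2_q1 cross2_q1 dot2_p1 cross2_p1 ex ey.
Qed.

(* The frame of p1 is a rotation of the frame of q1, hence determines the vectors too. *)
Lemma pframe_inj : injective pframe.
Proof.
have l1R2_neq0 : l1%:R ^+ 2 != 0 :> R by rewrite expf_neq0.
move=> u u' /ffunP e; apply/ffunP => i; have := e i; rewrite !ffunE /= !dot2_p1 !cross2_p1.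
case=> ex ey; apply: (txy_inj n2_gt0 n2_lt_l2 l2_lt_l1); apply: (mulfI l1R2_neq0).
  transitivity (l2%:R * (l2%:R * tx (u i) + n2%:R * ty (u i))
                - n2%:R * (l2%:R * ty (u i) - n2%:R * tx (u i))); first by rewrite pythR; ring.
  by rewrite ex ey pythR; ring.
transitivity (n2%:R * (l2%:R * tx (u i) + n2%:R * ty (u i))
              + l2%:R * (l2%:R * ty (u i) - n2%:R * tx (u i))); first by rewrite pythR; ring.
by rewrite ex ey pythR; ring.
Qed.

Lemma qframe_neq_pframe t u : ~~ allDrot u -> qframe t <> pframe u.
Proof.
move=> /forallPn [i uiD] /ffunP /(_ i).
rewrite !ffunE /= dot2_q1 cross2_q1 dot2_p1 cross2_p1 => -[ex ey].
by move: uiD; rewrite (Drot_of_rotation n2_gt0 n2_lt_l2 l2_lt_l1 pyth (esym ex) (esym ey)).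
Qed.

Lemma pframe_neq_fflip u u' : ~~ allDrot u -> pframe u' <> fflip (pframe u).
Proof.
move=> /forallPn [i uiD] /ffunP /(_ i); rewrite !ffunE /= !dot2_p1 !cross2_p1 => -[ex ey].
by move: uiD; rewrite (Drot_of_reflection n2_gt0 n2_lt_l2 l2_lt_l1 pyth ex ey).
Qed.

Lemma frame_value_qframe t : frame_value (qframe t) = c t.
Proof.
rewrite /frame_value; case E: symfind => [t'|]; last by case: (symfind_key E).
have [/qframe_inj -> // | ] := symfind_Some E.
by rewrite -qframe_tflip => /qframe_inj ->.
Qed.

Lemma frame_value_pframe u :
  frame_value (pframe u) = if allDrot u then c (trotm u) else d u.
Proof.
case: ifP => [uD | /negbT uD]; first by rewrite pframe_trotm // frame_value_qframe.
rewrite /frame_value symfind_None; last 2 first.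
- by move=> t; apply: qframe_neq_pframe.
- move=> t; rewrite -(tflipK t) qframe_tflip => /(inv_inj (@fflipK _ _)).
  exact: qframe_neq_pframe.
case E: symfind => [u'|]; last by case: (symfind_key E).
by have [/pframe_inj -> // | /(pframe_neq_fflip uD)] := symfind_Some E.
Qed.

Lemma sum_trotm (u : tuple) : allDrot u ->
  \sum_i tv (u i) = (\sum_i tv (trotm u i)) *m rotp1 R l1 l2 n2.
Proof.
move=> /forallP uD; rewrite mulmx_suml; apply: eq_bigr => i _.
by rewrite ffunE tvec_rotm_rotp1.
Qed.

Hypotheses (c_supp : forall t, c t != 0 -> \sum_i tv (t i) = q1)
  (d_supp : forall u, d u != 0 -> \sum_i tv (u i) = p1).

Lemma invP_q1 (t : tuple) : invP q1 (fun i => tv (t i)) = c t.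
Proof.
rewrite /invP frame_value_qframe.
case: (eqVneq (c t) 0) => [-> | /c_supp S]; first by case: ifP.
by rewrite S eqxx.
Qed.

Lemma invP_p1 (u : tuple) :
  invP p1 (fun i => tv (u i)) = if allDrot u then c (trotm u) else d u.
Proof.
rewrite /invP frame_value_pframe.
case: (eqVneq (if allDrot u then c (trotm u) else d u) 0) => [-> | ]; first by case: ifP.
case: ifP => [uD /c_supp | _ /d_supp ->]; last by rewrite eqxx.
by move=> S; rewrite (sum_trotm uD) S q1_rotp1 // eqxx.
Qed.

End Values.
End Construction.

Lemma mono_tuple (R : realType) (e : V -> nat) n : degree e = n ->
  exists t : {ffun 'I_n -> V}, forall y : 'I_6 -> complex R, mono e y = \prod_i avar y (t i).
Proof.
move=> <-; pose s := flatten [seq nseq (e v) v | v <- index_enum V].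
have size_s : size s = degree e.
  rewrite size_flatten /shape -map_comp sumnE big_map.
  by apply: eq_bigr => v _; rewrite /= size_nseq.
exists [ffun i : 'I_(degree e) => nth (ord0, false) s i] => y.
under [RHS]eq_bigr do rewrite ffunE.
transitivity (\prod_(v <- s) avar y v); last by rewrite (big_nth (ord0, false)) size_s big_mkord.
rewrite big_flatten big_map /mono; apply: eq_bigr => v _.
by rewrite big_nseq iter_mulr_1.
Qed.

Section Asum.
Variables (R : realType) (p : nat).
Local Notation tuple := {ffun 'I_p -> V}.
Implicit Types (x : 'I_6 -> complex R) (c : tuple -> complex R).

Definition Asum c x : complex R := \sum_(t : tuple) (\prod_i avar x (t i)) * c t.

Lemma AsumD c1 c2 x : Asum (fun t => c1 t + c2 t) x = Asum c1 x + Asum c2 x.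
Proof. by rewrite /Asum -big_split; apply: eq_bigr => t _; rewrite mulrDr. Qed.

Lemma AsumB c1 c2 x : Asum (fun t => c1 t - c2 t) x = Asum c1 x - Asum c2 x.
Proof. by rewrite /Asum -sumrB; apply: eq_bigr => t _; rewrite mulrBr. Qed.

Definition delta (t0 t : tuple) : complex R := (t == t0)%:R.

Lemma Asum_delta t0 x : Asum (delta t0) x = \prod_i avar x (t0 i).
Proof.
rewrite /Asum /delta (bigD1 t0) //= eqxx mulr1 [X in _ + X]big1 ?addr0 // => t /negbTE ->.
by rewrite mulr0.
Qed.

(* [restrictD x] keeps the coordinates of x that the variables indexed by Drot read;
   [transportD x] carries them along [rotm]. *)
Definition restrictD x : 'I_6 -> complex R := vec6 (x 0) (x 1) (x 2) 0 0 (x 5).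
Definition transportD x : 'I_6 -> complex R := vec6 (x 2) (x 5)^* 0 (x 0) (x 1) 0.

Lemma avar_restrictD x v : avar (restrictD x) v = if v \in Drot then avar x v else 0.
Proof.
case_V v; rewrite /avar /restrictD /vec6 /= ?conjC0 //.
all: by do ?congr (_ ^*); congr (x _); apply/val_inj.
Qed.

Lemma avar_transportD_rotm x v : avar (transportD x) (rotm v) = avar (restrictD x) v.
Proof. by case_V v; rewrite /avar /transportD /restrictD /vec6 /= ?conjCK ?conjC0. Qed.

Lemma Asum_restrictD c x :
  Asum c (restrictD x) = Asum (fun u => if allDrot u then c u else 0) x.
Proof.
apply: eq_bigr => u _; case: ifP => [/forallP uD | /forallPn [i uiD]].
  by congr (_ * _); apply: eq_bigr => i _; rewrite avar_restrictD uD.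
rewrite mulr0; apply/eqP; rewrite mulf_eq0; apply/orP; left.
by apply/prodf_eq0; exists i => //; rewrite avar_restrictD (negbTE uiD).
Qed.

Lemma Asum_transportD c x : Asum c (transportD x) = Asum (fun u => c (trotm u)) (restrictD x).
Proof.
rewrite /Asum (reindex_inj (@trotm_inj p)); apply: eq_bigr => u _.
by congr (_ * _); apply: eq_bigr => i _; rewrite ffunE avar_transportD_rotm.
Qed.

Lemma PsumE l1 l2 n2 (P : 'rV[R]_2 -> ('I_p -> 'rV[R]_2) -> complex R) k x :
  Psum l1 l2 n2 P k x = Asum (fun t => P k (fun i => tvec R l1 l2 n2 (t i))) x.
Proof. by []. Qed.

Lemma transportD_restrictDP (F G : ('I_6 -> complex R) -> complex R) :
  (forall z1 z2 w2 w3, F (vec6 z1 z2 0 w2 w3 0) = G (vec6 w2 w3 z1 0 0 z2^*)) <->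
  (forall x, F (transportD x) = G (restrictD x)).
Proof.
split=> FG; first by move=> x; have := FG (x 2) (x 5)^* (x 0) (x 1); rewrite conjCK.
move=> z1 z2 w2 w3; have := FG (vec6 w2 w3 z1 0 0 z2^*).
by rewrite [transportD _](_ : _ = vec6 z1 z2 0 w2 w3 0) // /transportD /= conjCK.
Qed.

Definition delta_pair (t0 t : tuple) : complex R := delta t0 t + delta (tflip t0) t.

Lemma delta_pair_tflip t0 t : delta_pair t0 (tflip t) = delta_pair t0 t.
Proof. by rewrite /delta_pair /delta (inv_eq (@tflipK p)) (can_eq (@tflipK p)) addrC. Qed.

Lemma Asum_delta_pair t0 x :
  Asum (delta_pair t0) x = \prod_i avar x (t0 i) + \prod_i avar (gamma3 x) (t0 i).
Proof.
rewrite AsumD !Asum_delta; congr (_ + _).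
by apply: eq_bigr => i _; rewrite ffunE avar_gamma3.
Qed.

End Asum.

Section Representation.
Variables (R : realType) (l1 l2 n2 p : nat).
Hypotheses (n2_gt0 : (0 < n2)%N) (n2_lt_l2 : (n2 < l2)%N) (l2_lt_l1 : (l2 < l1)%N)
  (pyth : (l1 ^ 2 = l2 ^ 2 + n2 ^ 2)%N).
Local Notation tv := (tvec R l1 l2 n2).
Local Notation q1 := (basevec R l1 l2 n2 0).
Local Notation p1 := (basevec R l1 l2 n2 2).
Local Notation tuple := {ffun 'I_p -> V}.

Lemma invariant_transportD_restrictD (P : 'rV[R]_2 -> ('I_p -> 'rV[R]_2) -> complex R) :
  (forall g k ks, orth2 g -> onA l1%:R k -> (forall i, onA l1%:R (ks i)) ->
     P (k *m g) (fun i => ks i *m g) = P k ks) ->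
  forall x, Asum (fun t => P q1 (fun i => tv (t i))) (transportD x)
            = Asum (fun u => P p1 (fun i => tv (u i))) (restrictD x).
Proof.
move=> P_orth x; rewrite Asum_transportD !Asum_restrictD.
apply: eq_bigr => u _; case: ifP => // /forallP uD; congr (_ * _).
rewrite -(q1_rotp1 R n2_gt0 n2_lt_l2 l2_lt_l1 pyth).
rewrite -(P_orth _ _ _ (orth2_rotp1 R n2_gt0 n2_lt_l2 l2_lt_l1 pyth)); last 2 first.
- exact: (onA_tvec R pyth (0, false)).
- by move=> i; apply: onA_tvec.
by congr P; apply: funext => i; rewrite ffunE tvec_rotm_rotp1.
Qed.

Lemma delta_supp (u0 : tuple) k : \sum_i tv (u0 i) = k ->
  forall u, delta R u0 u != 0 -> \sum_i tv (u i) = k.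
Proof. by move=> sum_u0 u; rewrite /delta; have [-> | _] := eqVneq u u0; rewrite ?eqxx. Qed.

Lemma delta_pair_supp (t0 : tuple) : \sum_i tv (t0 i) = q1 ->
  forall t, delta_pair R t0 t != 0 -> \sum_i tv (t i) = q1.
Proof.
move=> sum_t0 t; rewrite /delta_pair /delta.
have [-> _ | _] := eqVneq t t0; first exact: sum_t0.
have [-> _ | _] := eqVneq t (tflip t0); first exact: sum_tflip.
by rewrite addr0 eqxx.
Qed.

Variables (c d : tuple -> complex R).
Hypotheses (c_tflip : forall t, c (tflip t) = c t)
  (c_supp : forall t, c t != 0 -> \sum_i tv (t i) = q1)
  (d_supp : forall u, d u != 0 -> \sum_i tv (u i) = p1).

Lemma Asum_invP_q1 x : Asum (fun t => invP l1 l2 n2 c d q1 (fun i => tv (t i))) x = Asum c x.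
Proof. by apply: eq_bigr => t _; rewrite invP_q1. Qed.

Lemma Asum_invP_p1 x : (forall y, Asum c (transportD y) = Asum d (restrictD y)) ->
  Asum (fun u => invP l1 l2 n2 c d p1 (fun i => tv (u i))) x = Asum d x.
Proof.
move=> cd_compat.
transitivity (Asum (fun u => if allDrot u then c (trotm u) - d u else 0) x + Asum d x).
  rewrite -AsumD; apply: eq_bigr => u _; congr (_ * _).
  by rewrite invP_p1 //; case: ifP => _; rewrite ?subrK ?add0r.
by rewrite -Asum_restrictD AsumB -Asum_transportD cd_compat subrr add0r.
Qed.

End Representation.

Theorem mainTheorem12 (R : realType) (l1 l2 n2 : nat)
  (hl : (0 < n2 < l2)%N /\ (l2 < l1)%N) (hk : (l1 ^ 2 = l2 ^ 2 + n2 ^ 2)%N)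
  (p : nat) (hp : (1 <= p)%N) (e e' : 'I_6 * bool -> nat)
  (he : degree e = p) (he' : degree e' = p)
  (inv_e : forall (a b : R) (x : 'I_6 -> complex R),
     (transl l1 l2 n2 a b x 0)^* * mono e (transl l1 l2 n2 a b x) = (x 0)^* * mono e x)
  (inv_e' : forall (a b : R) (x : 'I_6 -> complex R),
     (transl l1 l2 n2 a b x 2)^* * mono e' (transl l1 l2 n2 a b x) = (x 2)^* * mono e' x) :
  let f := fun x : 'I_6 -> complex R => mono e x + mono e (gamma3 x) in
  let h := fun x : 'I_6 -> complex R => mono e' x in
  let kappa : R := l1%:R in
  (exists P : 'rV[R]_2 -> ('I_p -> 'rV[R]_2) -> complex R,
     (forall (g : 'M[R]_2) (k : 'rV[R]_2) (ks : 'I_p -> 'rV[R]_2),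
        orth2 g -> onA kappa k -> (forall i, onA kappa (ks i)) ->
        P (k *m g) (fun i => ks i *m g) = P k ks)
     /\ (forall (k : 'rV[R]_2) (ks : 'I_p -> 'rV[R]_2),
        onA kappa k -> (forall i, onA kappa (ks i)) ->
        k <> \sum_(i < p) ks i -> P k ks = 0)
     /\ (forall x : 'I_6 -> complex R,
           f x = @Psum R l1 l2 n2 p P (@basevec R l1 l2 n2 0) x
        /\ h x = @Psum R l1 l2 n2 p P (@basevec R l1 l2 n2 2) x))
  <->
  (forall z1 z2 w2 w3 : complex R,
     f (vec6 z1 z2 0 w2 w3 0) = h (vec6 w2 w3 z1 0 0 z2^*)).
Proof.
move=> f h kappa; case: hl => /andP[n2_gt0 n2_lt_l2] l2_lt_l1.
have [t0 mono_t0] := mono_tuple R he; have [u0 mono_u0] := mono_tuple R he'.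
have f_Asum x : f x = Asum (delta_pair R t0) x by rewrite Asum_delta_pair /f !mono_t0.
have h_Asum x : h x = Asum (delta R u0) x by rewrite Asum_delta /h mono_u0.
rewrite transportD_restrictDP; split.
- move=> [P [P_orth [_ P_rep]]] x.
  rewrite (proj1 (P_rep _)) (proj2 (P_rep _)) !PsumE.
  exact: invariant_transportD_restrictD.
- move=> fh_compat.
  have sum_t0 : \sum_i tvec R l1 l2 n2 (t0 i) = basevec R l1 l2 n2 0.
    by apply: transl_invariant_sum => a b x; rewrite -!mono_t0.
  have sum_u0 : \sum_i tvec R l1 l2 n2 (u0 i) = basevec R l1 l2 n2 2.
    by apply: transl_invariant_sum => a b x; rewrite -!mono_u0.
  exists (invP l1 l2 n2 (delta_pair R t0) (delta R u0)); split; [|split].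
  + by move=> g k ks gO _ _; apply: invP_orth2.
  + by move=> k ks _ _ /eqP k_neq; rewrite /invP (negbTE k_neq).
  + move=> x; rewrite !PsumE f_Asum h_Asum Asum_invP_q1 ?Asum_invP_p1 //.
    all: by [ apply: delta_pair_tflip | apply: delta_pair_supp | apply: delta_supp
            | move=> y; rewrite -f_Asum -h_Asum ].
Qed.
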